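(* For any $\ell\ge1$ and $a_1,\dots,a_\ell\in\{1,\dots,n\}$, the following equality holds in the reduction algebra $N/I$: $$P(x^{a_1}+I)\,P(x^{a_2}+I)\cdots P(x^{a_\ell}+I)=P(x^{a_1}x^{a_2}\cdots x^{a_\ell}+I).$$
   Context: $W_\eta(2n)$ is the unital associative $\mathbb{C}$-algebra generated by $x^a,\partial_a$ ($a=1,\dots,n$) and central elements $\eta_{ab},\eta^{ab}$ subject to $x^ax^b=x^bx^a$, $\partial_a\partial_b=\partial_b\partial_a$, $\partial_ax^b-x^b\partial_a=\delta_a^b$, $\eta_{ab}=\eta_{ba}$, $\sum_b\eta_{ab}\eta^{bc}=\delta_a^c$. Repeated upper/lower indices are summed; $x_a=\eta_{ab}x^b$, $\partial^a=\eta^{ab}\partial_b$; $E=\frac i2\partial_a\partial^a$, $F=\frac i2x_ax^a$, $H=-\frac12(x^a\partial_a+\partial_ax^a)$. $A$ is the localization of $W_\eta(2n)$ at the nonzero polynomials in $H$, $I=AE$ is the left ideal generated by $E$, $N=\{m\in A: Im\subset I\}$ its normalizer, and $N/I$ is the reduction algebra with product $(m+I)(m'+I)=mm'+I$. The extremal projector acts on $A/I$ by $P(w+I)=\sum_{k\ge0}\frac{(-1)^k}{k!}f_k(H)F^k(\operatorname{ad}E)^k(w)+I$, where $(\operatorname{ad}E)(y)=Ey-yE$, $f_0=1$ and $f_k(H)=\big((H+2)(H+3)\cdots(H+k+1)\big)^{-1}$; it is known that $P(w+I)\in N/I$ for all $w\in A$, that $P$ is the identity on $N/I$, and that $P(Fy+I)=0$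 for all $y\in A$. *)

From HB Require Import structures.
From mathcomp Require Import all_boot all_order all_algebra.
Set Implicit Arguments. Unset Strict Implicit. Unset Printing Implicit Defensive.
Import Order.TTheory GRing.Theory Num.Theory.
Local Open Scope ring_scope.

Section WeylEta.
Variables (R : numClosedFieldType) (B : unitAlgType R) (n : nat).
Variables (x d : 'I_n -> B) (etal etau : 'I_n -> 'I_n -> B).

(* Defining relations of W_eta(2n), read inside the algebra B. *)
Definition weyl_eta_rel : Prop :=
  (forall a b, x a * x b = x b * x a) /\
  (forall a b, d a * d b = d b * d a) /\
  (forall a b, d a * x b - x b * d a = (a == b)%:R) /\
  (forall a b y, etal a b * y = y * etal a b /\ etau a b * y = y * etau a b) /\
  (forall a b, etal a b = etal b a) /\
  (forall a c, \sum_b etal a b * etau b c = (a == c)%:R).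

Definition xlow a := \sum_b etal a b * x b.
Definition dup a := \sum_b etau a b * d b.

Definition Eop : B := ('i / 2 : R)%:A * \sum_a d a * dup a.
Definition Fop : B := ('i / 2 : R)%:A * \sum_a xlow a * x a.
Definition Hop : B := (- (1 / 2) : R)%:A * \sum_a (x a * d a + d a * x a).

Definition adE (y : B) : B := Eop * y - y * Eop.

Definition fk (k : nat) : B := (\prod_(2 <= j < k.+2) (Hop + j%:R))^-1.

(* Representative of P(w+I), with the sum over k < m; when (ad E)^m w = 0
   all further terms vanish, so this is the full series. *)
Definition Ptrunc (m : nat) (w : B) : B :=
  \sum_(k < m) ((-1) ^+ k / (k`!)%:R : R)%:A * fk k * Fop ^+ k * iter k adE w.

End WeylEta.

From HB Require Import structures.
From mathcomp Require Import all_boot all_order all_algebra.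
From mathcomp Require Import ring.
Set Implicit Arguments. Unset Strict Implicit. Unset Printing Implicit Defensive.
Import Order.TTheory GRing.Theory Num.Theory.
Local Open Scope ring_scope.

(* Modulo the left ideal A E, the truncated projector acts on an (ad E)-nilpotent
   element as left multiplication by P_M = \sum_k c_k f_k(H) F^k E^k.  This
   element is the identity on the normalizer {Q | E Q \in A E}, and it kills
   F v as soon as E^K v \in A E, because moving F to the left of P_M
   telescopes.  Since (ad E)^2 x^a = 0, P(x^a) = x^a - F H^-1 [E, x^a] lies in
   the normalizer, and expanding the product gives
   \prod P(x^a_i) = \prod x^a_i + F v with v such an element. *)

Definition bracket (A : pzRingType) (a b : A) := a * b - b * a.

Section Bracket.
Variables (A : pzRingType).
Implicit Types a b c : A.

Lemma bracketMl a b c : bracket (a * b) c = a * bracket b c + bracket a c * b.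
Proof. by rewrite /bracket mulrBr mulrBl !mulrA addrA subrK. Qed.

Lemma bracketMr a b c : bracket a (b * c) = bracket a b * c + b * bracket a c.
Proof. by rewrite /bracket mulrBr mulrBl !mulrA addrA subrK. Qed.

Lemma bracketDl a b c : bracket (a + b) c = bracket a c + bracket b c.
Proof. by rewrite /bracket mulrDl mulrDr opprD addrACA. Qed.

Lemma bracket_suml I (r : seq I) (P : pred I) (f : I -> A) b :
  bracket (\sum_(i <- r | P i) f i) b = \sum_(i <- r | P i) bracket (f i) b.
Proof. by rewrite /bracket mulr_suml mulr_sumr -sumrB. Qed.

Lemma bracket_sumr I (r : seq I) (P : pred I) (f : I -> A) b :
  bracket b (\sum_(i <- r | P i) f i) = \sum_(i <- r | P i) bracket b (f i).
Proof. by rewrite /bracket mulr_suml mulr_sumr -sumrB. Qed.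

Lemma bracketC a b : bracket a b = - bracket b a.
Proof. by rewrite /bracket opprB. Qed.

Lemma commr_bracket a b : a * b = b * a + bracket a b.
Proof. by rewrite /bracket addrC subrK. Qed.

Lemma bracket_comm a b : GRing.comm a b -> bracket a b = 0.
Proof. by rewrite /bracket => ->; rewrite subrr. Qed.

Lemma comm_bracket a b : bracket a b = 0 -> GRing.comm a b.
Proof. by move/eqP; rewrite subr_eq0 => /eqP. Qed.

End Bracket.

Lemma bracketZl (R : pzRingType) (A : algType R) k (a b : A) :
  bracket (k *: a) b = k *: bracket a b.
Proof. by rewrite /bracket -scalerAl -scalerAr scalerBr. Qed.

Lemma bracketZr (R : pzRingType) (A : algType R) k (a b : A) :
  bracket a (k *: b) = k *: bracket a b.
Proof. by rewrite /bracket -scalerAl -scalerAr scalerBr. Qed.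

Section LeftIdeal.
Variables (A : pzRingType) (e : A).
Local Notation ad := (bracket e).

Definition in_lideal (z : A) := exists y, z = y * e.

Lemma in_lideal0 : in_lideal 0.
Proof. by exists 0; rewrite mul0r. Qed.

Lemma in_lidealMe y : in_lideal (y * e).
Proof. by exists y. Qed.

Lemma in_lidealee : in_lideal e.
Proof. by exists 1; rewrite mul1r. Qed.

Lemma in_lidealD a b : in_lideal a -> in_lideal b -> in_lideal (a + b).
Proof. by move=> [y ->] [z ->]; exists (y + z); rewrite mulrDl. Qed.

Lemma in_lidealN a : in_lideal a -> in_lideal (- a).
Proof. by move=> [y ->]; exists (- y); rewrite mulNr. Qed.

Lemma in_lidealB a b : in_lideal a -> in_lideal b -> in_lideal (a - b).
Proof. by move=> ha hb; apply/in_lidealD/in_lidealN. Qed.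

Lemma in_lidealMl c a : in_lideal a -> in_lideal (c * a).
Proof. by move=> [y ->]; exists (c * y); rewrite mulrA. Qed.

Lemma in_lideal_sum (I : finType) (f : I -> A) :
  (forall i, in_lideal (f i)) -> in_lideal (\sum_i f i).
Proof. by move=> h; apply: (big_ind in_lideal in_lideal0 in_lidealD). Qed.

Lemma in_lideal_exprMw k k' w : (k <= k')%N ->
  in_lideal (e ^+ k * w) -> in_lideal (e ^+ k' * w).
Proof. by move=> le h; rewrite -(subnK le) exprD -mulrA; apply: in_lidealMl. Qed.

(* Left multiplication by e is ad e plus right multiplication by e. *)
Lemma in_lidealB_iter_bracket k z : in_lideal (e ^+ k * z - iter k ad z).
Proof.
elim: k => [|k [y IH]]; first by rewrite expr0 mul1r subrr; apply: in_lideal0.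
have -> : e ^+ k.+1 * z = e * (iter k ad z + y * e).
  by rewrite -IH addrC subrK exprS mulrA.
exists (iter k ad z + e * y).
by rewrite iterS /bracket mulrDr mulrDl mulrA opprB addrC !addrA subrK addrC.
Qed.

Lemma iter_bracket0 k : iter k ad 0 = 0.
Proof. by elim: k => //= k ->; rewrite /bracket mulr0 mul0r subrr. Qed.

Lemma iter_bracket_geq m k z : (m <= k)%N -> iter m ad z = 0 -> iter k ad z = 0.
Proof. by move=> le h; rewrite -(subnK le) iterD h iter_bracket0. Qed.

Lemma in_lideal_exprM_nilpotent j k z w : iter j.+1 ad z = 0 ->
  in_lideal (e ^+ k * w) -> in_lideal (e ^+ (j + k) * (z * w)).
Proof.
elim: j k z w => [|j IHj] k z w.
  move=> /comm_bracket /commr_sym /(commrX k) ez.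
  by rewrite add0n mulrA -ez -mulrA; apply: in_lidealMl.
elim: k w => [|k IHk] w hz hw.
  by case: hw => y; rewrite expr0 mul1r => ->; rewrite !mulrA; apply: in_lidealMe.
have -> : e ^+ (j.+1 + k.+1) * (z * w) =
    e ^+ (j + k).+1 * (ad z * w + z * (e * w)).
  rewrite addSn addnS exprSr -mulrA; congr (_ * _).
  by rewrite /bracket mulrBl !mulrA subrK.
rewrite mulrDr; apply: in_lidealD.
  by rewrite -addnS; apply: IHj; rewrite // -iterSr.
by rewrite -addSn; apply: IHk; rewrite // mulrA -exprSr.
Qed.

Definition lideal_torsion w := exists k, in_lideal (e ^+ k * w).

Lemma lideal_torsion1 : lideal_torsion 1.
Proof. by exists 1%N; rewrite mulr1 expr1; apply: in_lidealee. Qed.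

Lemma lideal_torsionD v w :
  lideal_torsion v -> lideal_torsion w -> lideal_torsion (v + w).
Proof.
move=> [k hv] [l hw]; exists (maxn k l); rewrite mulrDr.
by apply: in_lidealD; [apply: in_lideal_exprMw hv | apply: in_lideal_exprMw hw];
  rewrite ?leq_maxl ?leq_maxr.
Qed.

Lemma lideal_torsionN w : lideal_torsion w -> lideal_torsion (- w).
Proof. by move=> [k hw]; exists k; rewrite mulrN; apply: in_lidealN. Qed.

Lemma lideal_torsionM j z w :
  iter j ad z = 0 -> lideal_torsion w -> lideal_torsion (z * w).
Proof.
move=> /(iter_bracket_geq (leqnSn j)) hz [k hw].
by exists (j + k)%N; apply: in_lideal_exprM_nilpotent.
Qed.

Lemma lideal_torsion_prod I (s : seq I) (v : I -> A) j :
  (forall i, iter j ad (v i) = 0) -> lideal_torsion (\prod_(i <- s) v i).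
Proof.
move=> nil_v; elim: s => [|i s IH]; first by rewrite big_nil; apply: lideal_torsion1.
by rewrite big_cons; apply: lideal_torsionM (nil_v i) IH.
Qed.

End LeftIdeal.

Section ExtremalProjector.
Variables (R : numFieldType) (A : unitAlgType R) (E F H : A).
Hypothesis bracketEF : bracket E F = H.
Hypothesis bracketHE : bracket H E = E *+ 2.
Hypothesis bracketHF : bracket H F = - (F *+ 2).
Hypothesis unit_Hshift : forall c : R, H + c%:A \is a GRing.unit.
Local Notation ad := (bracket E).

Lemma mulE_Hshift c : E * (H + c%:A) = (H + (c - 2)%:A) * E.
Proof.
have EH : E * H = H * E - E *+ 2 by rewrite -bracketHE /bracket opprB addrC subrK.
rewrite mulrDr mulrDl EH mulr_algr mulr_algl scalerBl scaler_nat.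
by rewrite addrAC -addrA.
Qed.

Lemma mulF_Hshift c : F * (H + c%:A) = (H + (c + 2)%:A) * F.
Proof.
have FH : F * H = H * F + F *+ 2.
  by rewrite -[F *+ 2]opprK -bracketHF /bracket opprB addrC subrK.
rewrite mulrDr mulrDl FH mulr_algr mulr_algl scalerDl scaler_nat.
by rewrite addrAC -addrA.
Qed.

Lemma mulE_Hshift_inv c : E * (H + c%:A)^-1 = (H + (c - 2)%:A)^-1 * E.
Proof.
apply: (mulIr (unit_Hshift c)); rewrite mulrVK // -mulrA mulE_Hshift.
by rewrite mulKr.
Qed.

Lemma exprF_Hshift k c : F ^+ k * (H + c%:A) = (H + (c + 2 * k%:R)%:A) * F ^+ k.
Proof.
elim: k c => [|k IH] c; first by rewrite expr0 mul1r mulr1 mulr0 addr0.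
rewrite exprSr -mulrA mulF_Hshift mulrA IH -mulrA -exprSr.
by congr ((H + _%:A) * _); rewrite -natr1; ring.
Qed.

Lemma exprE_Hshift_inv k c :
  E ^+ k * (H + c%:A)^-1 = (H + (c - 2 * k%:R)%:A)^-1 * E ^+ k.
Proof.
elim: k c => [|k IH] c; first by rewrite expr0 mul1r mulr1 mulr0 subr0.
rewrite exprSr -mulrA mulE_Hshift_inv mulrA IH -mulrA -exprSr.
by congr ((H + _%:A)^-1 * _); rewrite -natr1; ring.
Qed.

Lemma exprE_F k :
  E ^+ k.+1 * F = F * E ^+ k.+1 + k.+1%:R *: ((H + (- k%:R)%:A) * E ^+ k).
Proof.
have EF : E * F = F * E + H by rewrite commr_bracket bracketEF.
elim: k => [|k IH]; first by rewrite expr1 expr0 mulr1 scale1r oppr0 scale0r addr0.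
rewrite exprS -mulrA IH mulrDr mulrA EF mulrDl -[F * E * _]mulrA -exprS.
rewrite -scalerAr [E * (_ * _)]mulrA mulE_Hshift -mulrA -exprS -addrA.
congr (_ + _); rewrite scalerAl -mulrDl [k.+2%:R *: _]scalerAl; congr (_ * _).
rewrite !scalerDr !scalerA addrA -{1}[H]scale1r -scalerDl.
by congr (_ *: _ + _%:A); rewrite -!natr1; ring.
Qed.

Definition proj_denom k := (\prod_(2 <= j < k.+2) (H + j%:R))^-1.

Lemma proj_denom0 : proj_denom 0 = 1.
Proof. by rewrite /proj_denom big_geq // invr1. Qed.

Lemma proj_denom1 : proj_denom 1 = (H + 2%:A)^-1.
Proof. by rewrite /proj_denom big_nat1 scaler_nat. Qed.

Lemma comm_Hshift a b : GRing.comm (H + a%:A) (H + b%:A).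
Proof.
rewrite /GRing.comm !mulrDl !mulrDr !mulr_algl !mulr_algr !scalerA mulrC.
by rewrite !addrA [_ + a *: H]addrAC.
Qed.

Lemma proj_denomS k : proj_denom k.+1 * (H + k.+2%:R%:A) = proj_denom k.
Proof.
have Hj j : H + j%:R = H + (j%:R : R)%:A by rewrite scaler_nat.
set P := \prod_(2 <= j < k.+2) (H + j%:R).
have unitP : P \is a GRing.unit.
  apply: (big_ind (fun z => z \is a GRing.unit)) => [|a b ua ub|j _].
  - exact: unitr1.
  - by rewrite unitrMl.
  - by rewrite Hj.
have commP : GRing.comm (H + k.+2%:R%:A) P.
  by apply: commr_prod => j _; rewrite Hj; apply: comm_Hshift.
rewrite /proj_denom big_nat_recr //= -/P Hj invrM // -mulrA.
by rewrite -(commrV commP) mulKr.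
Qed.

Definition proj_coef k : R := (-1) ^+ k / k`!%:R.

Lemma proj_coef0 : proj_coef 0 = 1.
Proof. by rewrite /proj_coef expr0 fact0 divr1. Qed.

Lemma proj_coefS k : proj_coef k.+1 * k.+1%:R = - proj_coef k.
Proof.
have fact_neq0 : (k`!%:R : R) != 0 by rewrite pnatr_eq0 -lt0n fact_gt0.
have succ_neq0 : (1 + k%:R : R) != 0 by rewrite addrC natr1 pnatr_eq0.
by rewrite /proj_coef factS natrM exprS -natr1; field; rewrite fact_neq0 addrC.
Qed.

Definition proj_trunc m w :=
  \sum_(k < m) (proj_coef k)%:A * proj_denom k * F ^+ k * iter k ad w.

Definition proj_elt m :=
  \sum_(k < m) (proj_coef k)%:A * proj_denom k * F ^+ k * E ^+ k.

Lemma proj_trunc_ext m M w :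
  (m <= M)%N -> iter m ad w = 0 -> proj_trunc M w = proj_trunc m w.
Proof.
move=> + nil_w; elim: M => [|M IH]; first by case: m nil_w.
rewrite leq_eqVlt ltnS => /predU1P[<- //|le_mM].
rewrite /proj_trunc big_ord_recr /= -/(proj_trunc M w) IH //.
by rewrite (iter_bracket_geq le_mM nil_w) mulr0 addr0.
Qed.

Lemma proj_trunc_elt m w : in_lideal E (proj_trunc m w - proj_elt m * w).
Proof.
rewrite /proj_trunc /proj_elt mulr_suml -sumrB; apply: in_lideal_sum => k.
rewrite -[_ * E ^+ k * w]mulrA -mulrBr; apply: in_lidealMl.
by rewrite -opprB; apply/in_lidealN/in_lidealB_iter_bracket.
Qed.

Lemma proj_elt1 : proj_elt 1 = 1.
Proof. by rewrite /proj_elt big_ord1 proj_coef0 scale1r proj_denom0 !expr0 !mulr1. Qed.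

Lemma proj_elt_normalizer m Q :
  in_lideal E (E * Q) -> in_lideal E (proj_elt m.+1 * Q - Q).
Proof.
move=> EQ; elim: m => [|m IH]; first by rewrite proj_elt1 mul1r subrr; apply: in_lideal0.
rewrite /proj_elt big_ord_recr /= -/(proj_elt m.+1) mulrDl addrAC.
apply: in_lidealD => //.
by rewrite [E ^+ m.+1]exprSr -!mulrA; do 4 apply: in_lidealMl.
Qed.

(* Pushing F through the series telescopes: only the top term survives. *)
Lemma proj_eltF m :
  proj_elt m.+1 * F = proj_coef m *: (proj_denom m * F ^+ m.+1 * E ^+ m).
Proof.
elim: m => [|m IH].
  by rewrite proj_elt1 mul1r proj_coef0 scale1r proj_denom0 mul1r expr1 expr0 mulr1.
rewrite /proj_elt big_ord_recr /= -/(proj_elt m.+1) mulrDl IH.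
rewrite -[_ * E ^+ m.+1 * F]mulrA exprE_F mulrDr.
have shiftF : F ^+ m.+1 * (H + (- m%:R)%:A) = (H + m.+2%:R%:A) * F ^+ m.+1.
  by rewrite exprF_Hshift; congr ((H + _%:A) * _); rewrite -!natr1; ring.
have top : m.+1%:R *: ((proj_coef m.+1)%:A * proj_denom m.+1 * F ^+ m.+1 *
      ((H + (- m%:R)%:A) * E ^+ m)) =
    - (proj_coef m *: (proj_denom m * F ^+ m.+1 * E ^+ m)).
  rewrite mulrA -[_ * F ^+ m.+1 * (H + _)]mulrA shiftF mulrA.
  rewrite -[_ * proj_denom m.+1 * (H + _)]mulrA proj_denomS mulr_algl.
  by rewrite -!scalerAl scalerA mulrC proj_coefS scaleNr.
rewrite -scalerAr top addrCA subrr addr0 mulr_algl -!scalerAl.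
by rewrite [F ^+ m.+2]exprSr !mulrA.
Qed.

(* Modulo A E, P_M fixes Q and kills F v, so P(u) = P_M (Q - F v) = Q. *)
Lemma proj_trunc_lift m Q u v :
  in_lideal E (E * Q) -> Q = u + F * v -> lideal_torsion E v ->
  iter m ad u = 0 -> in_lideal E (Q - proj_trunc m u).
Proof.
move=> EQ defQ [K torv] nil_u; set M := (m + K)%N.
rewrite -(proj_trunc_ext (leq_trans (leq_addr K m) (leqnSn M)) nil_u).
have Pu := proj_trunc_elt M.+1 u.
have PQ := proj_elt_normalizer M EQ.
have PFv : in_lideal E (proj_elt M.+1 * (F * v)).
  rewrite mulrA proj_eltF -scalerAl -mulr_algl -!mulrA; do 3 apply: in_lidealMl.
  exact: in_lideal_exprMw (leq_addl m K) torv.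
have -> : Q - proj_trunc M.+1 u = - (proj_elt M.+1 * Q - Q) +
    proj_elt M.+1 * (F * v) - (proj_trunc M.+1 u - proj_elt M.+1 * u).
  by rewrite {2}defQ mulrDr opprB opprD addrA subrK opprB addrA subrK.
by apply: in_lidealB => //; apply: in_lidealD => //; apply: in_lidealN.
Qed.

Lemma unitH : H \is a GRing.unit.
Proof. by have := unit_Hshift 0; rewrite scale0r addr0. Qed.

Lemma lideal_torsion_Hinv w : lideal_torsion E w -> lideal_torsion E (H^-1 * w).
Proof.
move=> [k torw]; exists k.
have EkHinv := exprE_Hshift_inv k 0; rewrite scale0r addr0 in EkHinv.
by rewrite mulrA EkHinv -mulrA; apply: in_lidealMl.
Qed.

Lemma iter3_bracketF : iter 3 ad F = 0.
Proof.
rewrite /= bracketEF [ad H]bracketC bracketHE /bracket mulrN mulNr.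
by rewrite mulrnAr mulrnAl opprK addNr.
Qed.

Definition proj_lin w := w - F * (H^-1 * ad w).

Lemma proj_trunc2 w : proj_trunc 2 w = proj_lin w.
Proof.
have HF : (H + 2%:A)^-1 * F = F * H^-1.
  apply: (mulIr unitH); rewrite mulrVK ?unitH // -mulrA.
  have := mulF_Hshift 0; rewrite scale0r addr0 add0r => ->.
  by rewrite mulKr.
rewrite /proj_trunc !big_ord_recr big_ord0 /= add0r proj_coef0 proj_denom0.
rewrite /proj_coef expr1 (_ : 1`! = 1)%N // divr1 scale1r scaleN1r proj_denom1.
by rewrite !expr0 !mulr1 mul1r expr1 mulN1r !mulNr HF /proj_lin mulrA.
Qed.

Lemma proj_trunc_lin m w :
  iter 2 ad w = 0 -> iter m ad w = 0 -> proj_trunc m w = proj_lin w.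
Proof.
move=> nil2 nilm; rewrite -(proj_trunc_ext (leq_maxl m 2) nilm).
by rewrite (proj_trunc_ext (leq_maxr m 2) nil2) proj_trunc2.
Qed.

Lemma proj_lin_normalizer w : iter 2 ad w = 0 -> in_lideal E (E * proj_lin w).
Proof.
move=> nil2; have E_adw : GRing.comm E (ad w) := comm_bracket nil2.
exists (w - F * ((H + (-2)%:A)^-1 * ad w)).
have Ew : E * w = w * E + ad w by rewrite addrC subrK.
have EF : E * F = F * E + H by rewrite commr_bracket bracketEF.
have EHinv : E * H^-1 = (H + (-2)%:A)^-1 * E.
  by have := mulE_Hshift_inv 0; rewrite scale0r addr0 sub0r.
rewrite /proj_lin mulrBr Ew (mulrA E F) EF mulrDl mulVKr ?unitH //.
rewrite -(mulrA F E) (mulrA E) EHinv -(mulrA _ E) E_adw.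
rewrite (mulrBl E w) (mulrA _ (ad w) E) (mulrA F _ E).
by rewrite opprD addrA addrAC addrK.
Qed.

Lemma prod_proj_lin_normalizer I (s : seq I) (v : I -> A) :
  (forall i, iter 2 ad (v i) = 0) ->
  in_lideal E (E * \prod_(i <- s) proj_lin (v i)).
Proof.
move=> nil_v; elim: s => [|i s [y Ey]].
  by rewrite big_nil mulr1; apply: in_lidealee.
have [z Ez] := proj_lin_normalizer (nil_v i).
by rewrite big_cons mulrA Ez -mulrA Ey mulrA; apply: in_lidealMe.
Qed.

Lemma prod_proj_lin_decomp I (s : seq I) (v : I -> A) :
  (forall i, iter 2 ad (v i) = 0) -> (forall i, GRing.comm (v i) F) ->
  exists2 w, \prod_(i <- s) proj_lin (v i) = \prod_(i <- s) v i + F * w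
           & lideal_torsion E w.
Proof.
move=> nil_v vF; elim: s => [|i s [w defP torw]].
  exists 0; first by rewrite !big_nil mulr0 addr0.
  by exists 0%N; rewrite mulr0; apply: in_lideal0.
have expand y D u w' : GRing.comm y F ->
    (y - F * (H^-1 * D)) * (u + F * w') =
    y * u + F * (y * w' - H^-1 * (D * u) - H^-1 * (D * (F * w'))).
  move=> yF; rewrite mulrBl !mulrDr (mulrA y F) yF -(mulrA F y).
  by rewrite !mulrN -!mulrA opprD !addrA.
set u := \prod_(j <- s) v j; set D := ad (v i).
exists (v i * w - H^-1 * (D * u) - H^-1 * (D * (F * w))).
  by rewrite !big_cons defP; apply: expand.
have nilD : iter 1 ad D = 0 := nil_v i.
apply/lideal_torsionD/lideal_torsionN/lideal_torsion_Hinv/(lideal_torsionM nilD).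
  apply/lideal_torsionD/lideal_torsionN/lideal_torsion_Hinv/(lideal_torsionM nilD).
    exact: lideal_torsionM (nil_v i) torw.
  exact: lideal_torsion_prod nil_v.
exact: lideal_torsionM iter3_bracketF torw.
Qed.

Theorem proj_trunc_prod I m (s : seq I) (v : I -> A) :
  (forall i, iter 2 ad (v i) = 0) -> (forall i, GRing.comm (v i) F) ->
  (forall i, iter m ad (v i) = 0) -> iter m ad (\prod_(i <- s) v i) = 0 ->
  in_lideal E (\prod_(i <- s) proj_trunc m (v i) - proj_trunc m (\prod_(i <- s) v i)).
Proof.
move=> nil2 vF nilm nil_prod.
rewrite (eq_bigr _ (fun i _ => proj_trunc_lin (nil2 i) (nilm i))).
have [w defP torw] := prod_proj_lin_decomp s nil2 vF.
exact: proj_trunc_lift (prod_proj_lin_normalizer s nil2) defP torw nil_prod.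
Qed.

End ExtremalProjector.

Lemma unit_addr_alg_of_poly (R : nzRingType) (A : unitAlgType R) (h : A) :
  (forall p : {poly R}, p != 0 -> (map_poly (in_alg A) p).[h] \is a GRing.unit) ->
  forall c : R, h + c%:A \is a GRing.unit.
Proof.
move=> unit_p c; have := unit_p _ (monic_neq0 (monicXaddC c)).
by rewrite rmorphD /= map_polyX map_polyC /= hornerD hornerX hornerC.
Qed.

Section Delta.
Variables (A : pzRingType) (I : finType).

Lemma sum_delta_l (a : I) (f : I -> A) : \sum_b (b == a)%:R * f b = f a.
Proof.
by rewrite (bigD1 a) //= eqxx mul1r big1 ?addr0 // => b /negbTE->; rewrite mul0r.
Qed.

Lemma sum_delta_r (a : I) (f : I -> A) : \sum_b f b * (b == a)%:R = f a.
Proof.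
by rewrite (bigD1 a) //= eqxx mulr1 big1 ?addr0 // => b /negbTE->; rewrite mulr0.
Qed.

End Delta.

Section WeylSl2.
Variables (R : numClosedFieldType) (B : unitAlgType R) (n : nat).
Variables (x d : 'I_n -> B) (etal etau : 'I_n -> 'I_n -> B).
Hypothesis rel : weyl_eta_rel x d etal etau.
Local Notation E := (Eop d etau).
Local Notation F := (Fop x etal).
Local Notation H := (Hop x d).
Local Notation xlow := (xlow x etal).
Local Notation dup := (dup d etau).

Lemma x_comm a b : x a * x b = x b * x a.
Proof. by case: rel => xx _; apply: xx. Qed.

Lemma d_comm a b : d a * d b = d b * d a.
Proof. by case: rel => _ [dd _]; apply: dd. Qed.

Lemma bracket_d_x a b : bracket (d a) (x b) = (a == b)%:R.
Proof. by case: rel => _ [_ [dx _]]; apply: dx. Qed.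

Lemma etal_comm a b y : etal a b * y = y * etal a b.
Proof. by case: rel => _ [_ [_ [central _]]]; case: (central a b y). Qed.

Lemma etau_comm a b y : etau a b * y = y * etau a b.
Proof. by case: rel => _ [_ [_ [central _]]]; case: (central a b y). Qed.

Lemma bracket_etal_r a b y : bracket y (etal a b) = 0.
Proof. by rewrite bracketC (bracket_comm (etal_comm _ _ _)) oppr0. Qed.

Lemma bracket_etau_l a b y : bracket (etau a b) y = 0.
Proof. exact/bracket_comm/etau_comm. Qed.

Lemma bracket_etau_r a b y : bracket y (etau a b) = 0.
Proof. by rewrite bracketC bracket_etau_l oppr0. Qed.

Lemma etal_sym a b : etal a b = etal b a.
Proof. by case: rel => _ [_ [_ [_ [lsym _]]]]; apply: lsym. Qed.

Lemma etal_etau a c : \sum_b etal a b * etau b c = (a == c)%:R.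
Proof. by case: rel => _ [_ [_ [_ [_ linv]]]]; apply: linv. Qed.

Lemma etau_etal a c : \sum_b etau b a * etal b c = (c == a)%:R.
Proof. by rewrite -etal_etau; apply: eq_bigr => b _; rewrite etau_comm etal_sym. Qed.

Lemma etau_sym a c : etau a c = etau c a.
Proof.
(* Sum etau_ec etal_eb etau_ba over b, e in both orders. *)
have -> : etau c a = \sum_b (\sum_e etau e c * etal e b) * etau b a.
  by under eq_bigr => b _ do rewrite etau_etal; rewrite sum_delta_l.
under eq_bigr => b _ do rewrite mulr_suml.
rewrite exchange_big /=.
under eq_bigr => e _ do under eq_bigr => b _ do rewrite -mulrA.
by under eq_bigr => e _ do rewrite -mulr_sumr etal_etau; rewrite sum_delta_r.
Qed.

Lemma bracket_dup_x a c : bracket (dup a) (x c) = etau a c.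
Proof.
rewrite /dup bracket_suml.
under eq_bigr => b _ do rewrite bracketMl bracket_d_x bracket_etau_l mul0r addr0.
exact: sum_delta_r.
Qed.

Lemma bracket_x a b : bracket (x a) (x b) = 0.
Proof. exact/bracket_comm/x_comm. Qed.

Lemma bracket_d a b : bracket (d a) (d b) = 0.
Proof. exact/bracket_comm/d_comm. Qed.

Lemma bracket_x_d a b : bracket (x a) (d b) = - (a == b)%:R.
Proof. by rewrite bracketC bracket_d_x eq_sym. Qed.

Lemma bracket_dup_d a c : bracket (dup a) (d c) = 0.
Proof.
rewrite /dup bracket_suml big1 // => b _.
by rewrite bracketMl bracket_d bracket_etau_l mul0r mulr0 addr0.
Qed.

Lemma two_neq0 : (2%:R : R) != 0.
Proof. by rewrite pnatr_eq0. Qed.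

Lemma bracket_E_x c : bracket E (x c) = 'i *: dup c.
Proof.
rewrite /Eop mulr_algl bracketZl bracket_suml.
under eq_bigr => a _ do rewrite bracketMl bracket_dup_x bracket_d_x.
rewrite big_split /= sum_delta_l.
have -> : \sum_a d a * etau a c = dup c.
  by apply: eq_bigr => a _; rewrite -etau_comm etau_sym.
by rewrite -mulr2n -scaler_nat scalerA divfK ?two_neq0.
Qed.

Lemma bracket_E_d b : bracket E (d b) = 0.
Proof.
rewrite /Eop mulr_algl bracketZl bracket_suml big1 ?scaler0 // => a _.
by rewrite bracketMl bracket_d bracket_dup_d mulr0 mul0r addr0.
Qed.

Lemma bracket_E_dup c : bracket E (dup c) = 0.
Proof.
rewrite /dup bracket_sumr big1 // => b _.
by rewrite bracketMr bracket_E_d bracket_etau_r mul0r mulr0 addr0.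
Qed.

Lemma iter2_bracket_E_x a : iter 2 (bracket E) (x a) = 0.
Proof. by rewrite /= bracket_E_x bracketZr bracket_E_dup scaler0. Qed.

Lemma scale_half_double (y : B) : (- (1 / 2) : R) *: (y + y) = - y.
Proof.
by rewrite -mulr2n -scaler_nat scalerA mulNr mul1r mulVf ?two_neq0 // scaleN1r.
Qed.

Lemma bracket_H_x c : bracket H (x c) = - x c.
Proof.
rewrite /Hop mulr_algl bracketZl bracket_suml.
under eq_bigr => a _ do
  rewrite bracketDl !bracketMl bracket_d_x bracket_x mul0r mulr0 addr0 add0r.
by rewrite big_split /= sum_delta_r sum_delta_l scale_half_double.
Qed.

Lemma bracket_H_d c : bracket H (d c) = d c.
Proof.
rewrite /Hop mulr_algl bracketZl bracket_suml.
under eq_bigr => a _ do rewrite bracketDl !bracketMl bracket_x_d bracket_d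
  mul0r addr0 mulr0 add0r mulNr mulrN -opprD.
by rewrite sumrN big_split /= sum_delta_l sum_delta_r scalerN scale_half_double opprK.
Qed.

Lemma bracket_H_dup a : bracket H (dup a) = dup a.
Proof.
rewrite /dup bracket_sumr; apply: eq_bigr => b _.
by rewrite bracketMr bracket_H_d bracket_etau_r mul0r add0r.
Qed.

Lemma bracket_H_xlow c : bracket H (xlow c) = - xlow c.
Proof.
rewrite /xlow bracket_sumr -sumrN; apply: eq_bigr => b _.
by rewrite bracketMr bracket_H_x bracket_etal_r mul0r add0r mulrN.
Qed.

Lemma weyl_HE : bracket H E = E *+ 2.
Proof.
rewrite /Eop !mulr_algl bracketZr bracket_sumr scalerMnr -sumrMnl.
congr (_ *: _); apply: eq_bigr => a _.
by rewrite bracketMr bracket_H_d bracket_H_dup mulr2n.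
Qed.

Lemma weyl_HF : bracket H F = - (F *+ 2).
Proof.
rewrite /Fop !mulr_algl bracketZr bracket_sumr scalerMnr -sumrMnl -scalerN -sumrN.
congr (_ *: _); apply: eq_bigr => a _.
by rewrite bracketMr bracket_H_x bracket_H_xlow mulrN mulNr mulr2n opprD.
Qed.

Lemma x_F_comm a : GRing.comm (x a) F.
Proof.
apply/comm_bracket; rewrite /Fop !mulr_algl bracketZr bracket_sumr.
rewrite big1 ?scaler0 // => c _.
rewrite bracketMr bracket_x mulr0 addr0 /xlow bracket_sumr big1 ?mul0r // => b _.
by rewrite bracketMr bracket_x bracket_etal_r mulr0 mul0r addr0.
Qed.

Lemma etal_dup c : \sum_b etal c b * dup b = d c.
Proof.
under eq_bigr => b _ do rewrite mulr_sumr.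
rewrite exchange_big /=.
under eq_bigr => e _ do under eq_bigr => b _ do rewrite mulrA.
by under eq_bigr => e _ do rewrite -mulr_suml etal_etau eq_sym; rewrite sum_delta_l.
Qed.

Lemma bracket_E_xlow c : bracket E (xlow c) = 'i *: d c.
Proof.
rewrite /xlow bracket_sumr.
under eq_bigr => b _ do
  rewrite bracketMr bracket_E_x bracket_etal_r mul0r add0r -scalerAr.
by rewrite -scaler_sumr etal_dup.
Qed.

Lemma xlow_dup : \sum_c xlow c * dup c = \sum_c x c * d c.
Proof.
rewrite /xlow; under eq_bigr => c _ do rewrite mulr_suml.
rewrite exchange_big /=; apply: eq_bigr => b _.
under eq_bigr => c _ do rewrite etal_comm -mulrA etal_sym.
by rewrite -mulr_sumr etal_dup.
Qed.

Lemma weyl_EF : bracket E F = H.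
Proof.
have i_half : ('i / 2 : R) * 'i = - (1 / 2) by rewrite mulrAC -expr2 sqrCi mulNr.
rewrite /Fop /Hop !mulr_algl bracketZr bracket_sumr.
under eq_bigr => c _ do
  rewrite bracketMr bracket_E_x bracket_E_xlow -scalerAl -scalerAr -scalerDr.
rewrite -scaler_sumr scalerA i_half big_split /= xlow_dup addrC -big_split /=.
by congr (_ *: _); apply: eq_bigr => c _; rewrite addrC.
Qed.

End WeylSl2.

Theorem mainTheorem6 (R : numClosedFieldType) (B : unitAlgType R) (n : nat)
    (x d : 'I_n -> B) (etal etau : 'I_n -> 'I_n -> B) :
  weyl_eta_rel x d etal etau ->
  (* localization: every nonzero polynomial in H is invertible *)
  (forall p : {poly R}, p != 0 ->
     (map_poly (in_alg B) p).[Hop x d] \is a GRing.unit) ->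
  forall (s : seq 'I_n) (m : nat), (0 < size s)%N ->
  (forall a, iter m (adE d etau) (x a) = 0) ->
  iter m (adE d etau) (\prod_(a <- s) x a) = 0 ->
  exists y : B,
    \prod_(a <- s) Ptrunc x d etal etau m (x a)
      - Ptrunc x d etal etau m (\prod_(a <- s) x a)
    = y * Eop d etau.
Proof.
(* Ptrunc, fk and adE unfold to
   proj_trunc, proj_denom and bracket E for the triple (Eop, Fop, Hop). *)
move=> rel loc s m _ nil_x nil_prod.
exact: (proj_trunc_prod (weyl_EF rel) (weyl_HE rel) (weyl_HF rel)
  (unit_addr_alg_of_poly loc) (iter2_bracket_E_x rel) (x_F_comm rel) nil_x nil_prod).
Qed.
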